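(* Let $q\in(0,1)$, $k\ge1$, and let $R:\mathbb{R}^k\to\mathbb{R}$ be a convex differentiable regularizer such that all the minimizers below exist. Run FTRL as follows for $t=1,\dots,T$: receive $g_t\in[0,1]^k$; set $\theta_t\in\arg\min_{\theta\in\mathbb{R}^k}\sum_{s=1}^{t-1}\ell_s(\theta)+R(\theta)$; predict $\hat\tau_t=\langle\theta_t,g_t\rangle$; receive $\tau_t\in[0,1]$; define the linear loss $\ell_t(\theta)=\langle\theta,g_t\rangle\,(\mathbf{1}[\tau_t\le\hat\tau_t]-q)$ (the linearization of $\theta\mapsto p_q(\langle\theta,g_t\rangle,\tau_t)$ at $\theta_t$). Let $\theta_{T+1}\in\arg\min_\theta\sum_{s=1}^{T}\ell_s(\theta)+R(\theta)$. Then for every $i\in[k]$ with $T_i>0$, $$\left|\mathrm{Cov}(\Pi_T,G_i)-q\right|\le\frac{\|\nabla R(\theta_{T+1})\|_\infty}{T_i}.$$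
   Context: For $q\in(0,1)$ the pinball loss is $p_q(\hat\tau,\tau)=q(\tau-\hat\tau)$ if $\tau\ge\hat\tau$ and $p_q(\hat\tau,\tau)=(q-1)(\tau-\hat\tau)$ if $\tau<\hat\tau$. There are $k$ prediction-independent groups $G_1,\dots,G_k$ (functions of the history and context, with values in $[0,1]$, not depending on the current prediction), and $g_t=(g_{t,1},\dots,g_{t,k})$ with $g_{t,i}=G_i$ evaluated at round $t$; the sequences $g_t,\tau_t$ may be chosen adversarially. The group size is $T_i=\sum_{t=1}^T g_{t,i}$ and the group conditional coverage is $\mathrm{Cov}(\Pi_T,G_i)=\frac{1}{T_i}\sum_{t=1}^T\mathbf{1}[\hat\tau_t\ge\tau_t]\,g_{t,i}$. *)

From HB Require Import structures.
From mathcomp Require Import all_boot all_order all_algebra.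
From mathcomp Require Import all_classical all_reals all_analysis.
Set Implicit Arguments. Unset Strict Implicit. Unset Printing Implicit Defensive.
Import Order.TTheory GRing.Theory Num.Theory.
Import numFieldNormedType.Exports.
Local Open Scope ring_scope.

Section FTRLDefs.
Variables (R : realType) (k : nat).

Definition dotv (th g : 'rV[R]_k) : R := \sum_(i < k) th 0 i * g 0 i.

Definition convex_fun (f : 'rV[R]_k -> R) : Prop :=
  forall (x y : 'rV[R]_k) (l : R), 0 <= l -> l <= 1 ->
    f (l *: x + (1 - l) *: y) <= l * f x + (1 - l) * f y.

Definition partial (f : 'rV[R]_k -> R) (x : 'rV[R]_k) (i : 'I_k) : R :=
  'D_(delta_mx 0 i) f x.

Definition grad_supnorm (f : 'rV[R]_k -> R) (x : 'rV[R]_k) : R :=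
  \big[Num.max/0]_(i < k) `|partial f x i|.

Definition pred_t (theta g : nat -> 'rV[R]_k) (t : nat) : R :=
  dotv (theta t) (g t).

Definition lin_loss (q : R) (theta g : nat -> 'rV[R]_k) (tau : nat -> R)
  (s : nat) (th : 'rV[R]_k) : R :=
  dotv th (g s) * (((tau s <= pred_t theta g s)%R : bool)%:R - q).

(* FTRL objective at round t (0-based: rounds 0..t-1 observed) *)
Definition ftrl_obj (q : R) (Rg : 'rV[R]_k -> R) (theta g : nat -> 'rV[R]_k)
  (tau : nat -> R) (t : nat) (th : 'rV[R]_k) : R :=
  \sum_(s < t) lin_loss q theta g tau s th + Rg th.

Definition group_size (g : nat -> 'rV[R]_k) (T : nat) (i : 'I_k) : R :=
  \sum_(t < T) g t 0 i.

Definition coverage (theta g : nat -> 'rV[R]_k) (tau : nat -> R) (T : nat)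
  (i : 'I_k) : R :=
  (group_size g T i)^-1 *
  \sum_(t < T) ((tau t <= pred_t theta g t)%R : bool)%:R * g t 0 i.

End FTRLDefs.

(* The FTRL iterate theta_{T+1} minimises the objective along every coordinate line
   through it, so its partial derivative in direction i vanishes.  The linear losses
   contribute sum_t g_{t,i} (1[tau_t <= tauhat_t] - q) = T_i (Cov(Pi_T, G_i) - q) to that
   derivative, hence T_i |Cov - q| equals the i-th partial derivative of R, which is at
   most the sup norm of the gradient. *)
From HB Require Import structures.
From mathcomp Require Import all_boot all_order all_algebra.
From mathcomp Require Import all_classical all_reals all_analysis.
From mathcomp Require Import ring lra.
Set Implicit Arguments. Unset Strict Implicit. Unset Printing Implicit Defensive.
Import Order.TTheory GRing.Theory Num.Theory.
Import numFieldNormedType.Exports.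
Local Open Scope ring_scope.

Section FirstOrderCondition.
Variables (R : realType) (V : normedModType R).

Lemma is_derive_along_line (f : V -> R) (e x : V) (t : R) :
  differentiable f (t *: e + x) ->
  is_derive t 1 (fun h : R => f (h *: e + x)) ('D_e f (t *: e + x)).
Proof.
move=> df.
have shiftE : (fun h : R => h^-1 *: (((fun h0 : R => f (h0 *: e + x)) \o shift t) (h *: 1)
                 - f (t *: e + x))) =
              (fun h : R => h^-1 *: ((f \o shift (t *: e + x)) (h *: e) - f (t *: e + x))).
  apply/funext => h /=; congr (_ *: (f _ - _)).
  by rewrite /shift /= scalerDl addrA [h *: 1]mulr1.
have := @diff_derivable _ _ _ _ _ e df.
by split; rewrite /derivable /derive shiftE.
Qed.

Lemma derive_along_line_at_min (f : V -> R) (e x : V) (c : R) :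
  (forall t : R, differentiable f (t *: e + x)) ->
  (forall t : R, f x <= f (t *: e + x) + c * t) ->
  'D_e f x + c = 0.
Proof.
move=> df xmin.
pose psi : R -> R := (fun h : R => f (h *: e + x)) + (c \*: (@id R)).
have dpsi t : is_derive t (1 : R) psi ('D_e f (t *: e + x) + c *: 1).
  exact/is_deriveD/is_derive_along_line.
have psi_min : is_derive (0 : R) 1 psi 0.
  apply: (@derive1_at_min _ _ (-1) 1) => //; first by rewrite in_itv /= ltrN10 ltr01.
  move=> t _; rewrite -[X in X <= _]/(f (0 *: e + x) + c *: 0).
  rewrite -[X in _ <= X]/(f (t *: e + x) + c *: t).
  by rewrite scale0r add0r [c *: 0]mulr0 addr0; exact: xmin.
have := @derive_val _ _ _ _ _ _ _ (dpsi 0).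
rewrite (@derive_val _ _ _ _ _ _ _ psi_min) scale0r add0r.
by rewrite [c *: 1]mulr1 => ->.
Qed.

End FirstOrderCondition.

Section FTRLCoordinateLine.
Variables (R : realType) (k : nat) (q : R) (Rg : 'rV[R]_k -> R).
Variables (g : nat -> 'rV[R]_k) (tau : nat -> R) (theta : nat -> 'rV[R]_k).

Definition coverage_excess (T : nat) (i : 'I_k) : R :=
  \sum_(s < T) g s 0 i * (((tau s <= pred_t theta g s)%R : bool)%:R - q).

Lemma dotv_addZdelta (i : 'I_k) (h : R) (th u : 'rV[R]_k) :
  dotv (h *: delta_mx 0 i + th) u = h * u 0 i + dotv th u.
Proof.
rewrite /dotv (bigD1 i) //= [X in _ = _ + X](bigD1 i) //=.
rewrite !mxE !eqxx /= mulr1n mulr1 mulrDl addrA; congr (_ + _).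
by apply: eq_bigr => j /negbTE ji; rewrite !mxE ji andbF mulr0 add0r.
Qed.

Lemma ftrl_obj_along_line (T : nat) (i : 'I_k) (h : R) (th : 'rV[R]_k) :
  ftrl_obj q Rg theta g tau T (h *: delta_mx 0 i + th) =
  ftrl_obj q Rg theta g tau T th + (Rg (h *: delta_mx 0 i + th) - Rg th)
    + coverage_excess T i * h.
Proof.
rewrite /ftrl_obj /lin_loss /coverage_excess.
under eq_bigr => s _ do rewrite dotv_addZdelta mulrDl.
rewrite big_split /= mulr_suml.
have -> : \sum_(s < T) h * g s 0 i * (((tau s <= pred_t theta g s)%R : bool)%:R - q) =
          \sum_(s < T) g s 0 i * (((tau s <= pred_t theta g s)%R : bool)%:R - q) * h.
  by apply: eq_bigr => s _; ring.
set S := \sum_(s < T) dotv _ _ * _; lra.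
Qed.

Lemma coverage_subq (T : nat) (i : 'I_k) : group_size g T i != 0 ->
  coverage theta g tau T i - q = coverage_excess T i / group_size g T i.
Proof.
move=> Ti_neq0; rewrite /coverage /coverage_excess.
under [X in _ = X / _]eq_bigr => s _ do rewrite mulrBr.
rewrite sumrB -mulr_suml -/(group_size g T i).
under [X in _ = (X - _) / _]eq_bigr => s _ do rewrite mulrC.
by field.
Qed.

Lemma ftrl_partial_at_min (T : nat) (i : 'I_k) :
  (forall x, differentiable Rg x) ->
  (forall th, ftrl_obj q Rg theta g tau T (theta T) <= ftrl_obj q Rg theta g tau T th) ->
  partial Rg (theta T) i = - coverage_excess T i.
Proof.
move=> dR opt; apply/eqP; rewrite -addr_eq0; apply/eqP.
apply: derive_along_line_at_min => // t.
have := opt (t *: delta_mx 0 i + theta T); rewrite ftrl_obj_along_line.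
lra.
Qed.

End FTRLCoordinateLine.

Lemma normr_partial_le_grad_supnorm (R : realType) (k : nat)
    (f : 'rV[R]_k -> R) (x : 'rV[R]_k) (i : 'I_k) :
  `|partial f x i| <= grad_supnorm f x.
Proof. exact: (le_bigmax _ _ i). Qed.

Theorem theorem8 (R : realType) (k : nat) (q : R) (Rg : 'rV[R]_k -> R)
    (T : nat) (g : nat -> 'rV[R]_k) (tau : nat -> R) (theta : nat -> 'rV[R]_k) :
  0 < q -> q < 1 -> (0 < k)%N ->
  convex_fun Rg ->
  (forall x : 'rV[R]_k, differentiable Rg x) ->
  (forall t, (t < T)%N -> forall i : 'I_k, 0 <= g t 0 i <= 1) ->
  (forall t, (t < T)%N -> 0 <= tau t <= 1) ->
  (forall t, (t <= T)%N -> forall th : 'rV[R]_k,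
      ftrl_obj q Rg theta g tau t (theta t) <= ftrl_obj q Rg theta g tau t th) ->
  forall i : 'I_k, 0 < group_size g T i ->
    `|coverage theta g tau T i - q| <= grad_supnorm Rg (theta T) / group_size g T i.
Proof.
move=> _ _ _ _ dR _ _ opt i Ti_gt0.
rewrite coverage_subq ?gt_eqF // normrM normfV (gtr0_norm Ti_gt0).
rewrite ler_pM2r ?invr_gt0 // -normrN.
rewrite -(ftrl_partial_at_min i dR (opt T (leqnn T))).
exact: normr_partial_le_grad_supnorm.
Qed.
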